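(* For every environment $\omega$, $n=l+m$, $x=-l+m$ with $l,m\ge0$, $$P^{\omega}_n(X_n=x)=P^{\mathbf 0}_n(X_n=x)+\tfrac12\{p^{(H)}_n(l,m)^2-q^{(H)}_n(l,m)^2\}\sin(\omega_0),$$ where $P^{\mathbf 0}_n$ denotes the quenched law for the environment $\omega\equiv0$.
   Context: $U_x=\frac{1}{\sqrt2}\begin{pmatrix} e^{i\omega_x} & 1\\ 1 & -e^{-i\omega_x}\end{pmatrix}=\begin{pmatrix} a_x & b_x\\ c_x & d_x\end{pmatrix}$ ($\omega_x\in\mathbb R$), $P_x=\begin{pmatrix} a_x & b_x\\ 0&0\end{pmatrix}$, $Q_x=\begin{pmatrix} 0&0\\ c_x & d_x\end{pmatrix}$. $\Xi_0(0,0)=I$, $\Xi_n(l,m)=0$ if $l<0$ or $m<0$, and $\Xi_{n+1}(l,m)=P_{x+1}\Xi_n(l-1,m)+Q_{x-1}\Xi_n(l,m-1)$ for $l,m\ge0$, $l+m=n+1$, $x=-l+m$. With $\varphi_*={}^T[1/\sqrt2,i/\sqrt2]$, $P^{\omega}_n(X_n=x)=\|\Xi_n(l,m)\varphi_*\|^2$. Here, for $\min\{l,m\}\ge1$, $p^{(H)}_n(l,m)=(1/\sqrt2)^{n-1}\sum_{\gamma=1}^{(l-1)\wedge m}(-1)^{m-\gamma}\binom{l-1}{\gamma}\binom{m-1}{\gamma-1}$ and $q^{(H)}_n(l,m)=(1/\sqrt2)^{n-1}\sum_{\gamma=1}^{l\wedge(m-1)}(-1)^{m-\gamma-1}\binom{l-1}{\gamma-1}\binom{m-1}{\gamma}$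 (empty sums are $0$); $p^{(H)}_n(0,n)=0$, $q^{(H)}_n(0,n)=(-1/\sqrt2)^{n-1}$, $p^{(H)}_n(n,0)=(1/\sqrt2)^{n-1}$, $q^{(H)}_n(n,0)=0$ for $n\ge1$, and $p^{(H)}_0(0,0)=q^{(H)}_0(0,0)=0$. *)

From Stdlib Require Import Reals ZArith List.
Open Scope R_scope.

(* Complex numbers as (real part, imaginary part). *)
Definition C : Type := (R * R)%type.
Definition Cadd (z w : C) : C := (fst z + fst w, snd z + snd w).
Definition Cmul (z w : C) : C :=
  (fst z * fst w - snd z * snd w, fst z * snd w + snd z * fst w).
Definition Cr (r : R) : C := (r, 0).
Definition C0 : C := (0, 0).
Definition C1 : C := (1, 0).
Definition Cexpi (t : R) : C := (cos t, sin t).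
Definition Cnorm2 (z : C) : R := fst z * fst z + snd z * snd z.

Record M2 := mkM2 { m11 : C; m12 : C; m21 : C; m22 : C }.
Definition V2 : Type := (C * C)%type.

Definition Madd (A B : M2) : M2 :=
  mkM2 (Cadd (m11 A) (m11 B)) (Cadd (m12 A) (m12 B))
       (Cadd (m21 A) (m21 B)) (Cadd (m22 A) (m22 B)).
Definition Mmul (A B : M2) : M2 :=
  mkM2 (Cadd (Cmul (m11 A) (m11 B)) (Cmul (m12 A) (m21 B)))
       (Cadd (Cmul (m11 A) (m12 B)) (Cmul (m12 A) (m22 B)))
       (Cadd (Cmul (m21 A) (m11 B)) (Cmul (m22 A) (m21 B)))
       (Cadd (Cmul (m21 A) (m12 B)) (Cmul (m22 A) (m22 B))).
Definition Mzero : M2 := mkM2 C0 C0 C0 C0.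
Definition Mid : M2 := mkM2 C1 C0 C0 C1.
Definition Mapply (A : M2) (v : V2) : V2 :=
  (Cadd (Cmul (m11 A) (fst v)) (Cmul (m12 A) (snd v)),
   Cadd (Cmul (m21 A) (fst v)) (Cmul (m22 A) (snd v))).
Definition Vnorm2 (v : V2) : R := Cnorm2 (fst v) + Cnorm2 (snd v).

Definition env : Type := Z -> R.

Definition ax (w : env) (x : Z) : C := Cmul (Cr (/ sqrt 2)) (Cexpi (w x)).
Definition bx (w : env) (x : Z) : C := Cr (/ sqrt 2).
Definition cx (w : env) (x : Z) : C := Cr (/ sqrt 2).
Definition dx (w : env) (x : Z) : C :=
  Cmul (Cr (- / sqrt 2)) (Cexpi (- w x)).
Definition Ux (w : env) (x : Z) : M2 := mkM2 (ax w x) (bx w x) (cx w x) (dx w x).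
Definition Px (w : env) (x : Z) : M2 := mkM2 (ax w x) (bx w x) C0 C0.
Definition Qx (w : env) (x : Z) : M2 := mkM2 C0 C0 (cx w x) (dx w x).

(* Xi_n(l,m), used with l + m = n; x = -l + m. *)
Fixpoint XiAux (w : env) (n l m : nat) : M2 :=
  match n with
  | O => match l, m with O, O => Mid | _, _ => Mzero end
  | S n' =>
      let x := (- Z.of_nat l + Z.of_nat m)%Z in
      Madd
        (match l with O => Mzero | S l' => Mmul (Px w (x + 1)%Z) (XiAux w n' l' m) end)
        (match m with O => Mzero | S m' => Mmul (Qx w (x - 1)%Z) (XiAux w n' l m') end)
  end.
Definition Xi (w : env) (l m : nat) : M2 := XiAux w (l + m) l m.

Definition phistar : V2 := ((/ sqrt 2, 0), (0, / sqrt 2)).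

(* P^w_n(X_n = x) with n = l + m, x = -l + m *)
Definition prob (w : env) (l m : nat) : R := Vnorm2 (Mapply (Xi w l m) phistar).

Definition env0 : env := fun _ => 0.

Definition sum1 (k : nat) (f : nat -> R) : R :=
  fold_right Rplus 0 (map f (seq 1 k)).

Definition pH (l m : nat) : R :=
  match l, m with
  | O, _ => 0
  | S _, O => (/ sqrt 2) ^ (l + m - 1)
  | S _, S _ =>
      (/ sqrt 2) ^ (l + m - 1) *
      sum1 (Nat.min (l - 1) m)
        (fun g => (-1) ^ (m - g) * Binomial.C (l - 1) g * Binomial.C (m - 1) (g - 1))
  end.
Definition qH (l m : nat) : R :=
  match l, m with
  | O, O => 0
  | O, S _ => (- / sqrt 2) ^ (l + m - 1)
  | S _, O => 0
  | S _, S _ =>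
      (/ sqrt 2) ^ (l + m - 1) *
      sum1 (Nat.min l (m - 1))
        (fun g => (-1) ^ (m - g - 1) * Binomial.C (l - 1) (g - 1) * Binomial.C (m - 1) g)
  end.

(* With a suitable real phase [phase w x] (a discrete
   primitive of the environment), one has
     Xi^w_n(l,m) = D_x Xi^0_n(l,m) E,   D_x = diag(e^{i phase(x)}, e^{i phase(x-1)}),
   E = diag(e^{i omega_0}, 1), by induction on [n] from the one-step identities
   [P^w_{x+1} D_{x+1} = D_x P^0_{x+1}] and [Q^w_{x-1} D_{x-1} = D_x Q^0_{x-1}].
   As [D_x] preserves norms and the free matrix [Xi^0] is real, the
   probability equals (a^2+b^2+c^2+d^2)/2 + (ab + cd) sin omega_0, where
   Xi^0 = [[a,b],[c,d]].

   The combinations (a+b), (c-d), (a-b), (c+d) of the free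
   matrix are sqrt 2 times pH, qH, rH, rH, where rH is a third alternating
   binomial sum; this follows by induction from Pascal-type recurrences of
   these sums.  Then ab + cd = (pH^2 - qH^2)/2, and comparing with [w = 0]
   (where sin omega_0 = 0) gives the theorem. *)

From Pilot Require Import Defs.
From Stdlib Require Import Reals ZArith List Lia Lra.
Open Scope R_scope.

(* Binomial coefficients as reals, defined by Pascal's rule.  Unlike
   [Binomial.C] they vanish above the diagonal, so that the summation ranges
   below can be enlarged freely. *)
Fixpoint binom (n k : nat) : R :=
  match n, k with
  | O, O => 1
  | O, S _ => 0
  | S _, O => 1
  | S n', S k' => binom n' k' + binom n' (S k')
  end.

Lemma binom_0_r n : binom n 0 = 1.
Proof. destruct n; reflexivity. Qed.

Lemma binom_gt n k : (n < k)%nat -> binom n k = 0.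
Proof.
  revert k; induction n as [|n IH]; intros [|k] Hk; try lia; simpl; auto.
  rewrite !IH by lia. ring.
Qed.

Lemma binom_diag n : binom n n = 1.
Proof. induction n as [|n IH]; simpl; auto. rewrite IH, binom_gt by lia. ring. Qed.

Lemma C_binom n k : (k <= n)%nat -> Binomial.C n k = binom n k.
Proof.
  revert k; induction n as [|n IH]; intros k Hk.
  - replace k with O by lia. unfold Binomial.C. simpl. field.
  - destruct k as [|k].
    + rewrite binom_0_r. unfold Binomial.C. rewrite Nat.sub_0_r. simpl (fact 0).
      change (INR 1) with 1. rewrite Rmult_1_l. apply Rinv_r, INR_fact_neq_0.
    + destruct (Nat.eq_dec k n) as [->|Hne].
      * rewrite binom_diag. unfold Binomial.C. rewrite Nat.sub_diag. simpl (fact 0).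
        change (INR 1) with 1. rewrite Rmult_1_r. apply Rinv_r, INR_fact_neq_0.
      * rewrite <- Binomial.pascal by lia. simpl. rewrite !IH by lia. ring.
Qed.

Fixpoint sumR (f : nat -> R) (N : nat) : R :=
  match N with O => 0 | S N' => sumR f N' + f N' end.

Lemma sumR_ext f g N : (forall k, (k < N)%nat -> f k = g k) -> sumR f N = sumR g N.
Proof. induction N as [|N IH]; intros H; simpl; auto. rewrite IH, H by auto. reflexivity. Qed.

Lemma sumR_add f g N : sumR (fun k => f k + g k) N = sumR f N + sumR g N.
Proof. induction N as [|N IH]; simpl; [ring|]. rewrite IH. ring. Qed.

Lemma sumR_opp f N : sumR (fun k => - f k) N = - sumR f N.
Proof. induction N as [|N IH]; simpl; [ring|]. rewrite IH. ring. Qed.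

Lemma sumR_zero f N : (forall k, f k = 0) -> sumR f N = 0.
Proof. intros H. induction N as [|N IH]; simpl; auto. rewrite IH, H. ring. Qed.

Lemma sumR_first f N : sumR f (S N) = f O + sumR (fun k => f (S k)) N.
Proof. induction N as [|N IH]; simpl in *; [ring|]. rewrite IH. ring. Qed.

Lemma sumR_trunc f m N : (forall k, (m <= k)%nat -> f k = 0) -> (m <= N)%nat ->
  sumR f N = sumR f m.
Proof. intros Hf HN. induction HN as [|N HN IH]; auto. simpl. rewrite IH, Hf by lia. ring. Qed.

Lemma sumR_last_zero f N : f N = 0 -> sumR f (S N) = sumR f N.
Proof. intros H; simpl; rewrite H; ring. Qed.

Lemma sum1_sumR k f : sum1 k f = sumR (fun t => f (S t)) k.
Proof.
  unfold sum1.
  assert (G : forall a, fold_right Rplus 0 (map f (seq a k)) =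
                        sumR (fun t => f (a + t)%nat) k).
  { induction k as [|k IH]; intros a; [reflexivity|]. cbn [seq map fold_right].
    rewrite sumR_first, IH, Nat.add_0_r. f_equal.
    apply sumR_ext. intros; f_equal; lia. }
  rewrite G. apply sumR_ext; intros; f_equal.
Qed.

Lemma sign_sub a b : (a <= b)%nat -> (-1) ^ (b - a) = (-1) ^ (b + a).
Proof.
  intros H. replace (b + a)%nat with ((b - a) + 2 * a)%nat by lia.
  rewrite pow_add, pow_mult. replace ((-1) ^ 2) with 1 by ring. rewrite pow1. ring.
Qed.

(* The three alternating binomial convolutions behind the amplitudes of the
   Hadamard walk: [pH], [qH] and the auxiliary amplitude [rH] are these sums
   times a power of [1/sqrt 2]. *)
Definition coefP i j := sumR (fun k => (-1) ^ (j + k) * binom i (S k) * binom j k) (S (i + j)).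
Definition coefQ i j := sumR (fun k => (-1) ^ (j + k + 1) * binom i k * binom j (S k)) (S (i + j)).
Definition coefR i j := sumR (fun k => (-1) ^ (j + k) * binom i k * binom j k) (S (i + j)).

Lemma coefP_0_l j : coefP 0 j = 0.
Proof. apply sumR_zero. intros k. simpl. ring. Qed.

Lemma coefQ_0_r i : coefQ i 0 = 0.
Proof. apply sumR_zero. intros k. simpl binom. ring. Qed.

Lemma coefR_0_r i : coefR i 0 = 1.
Proof.
  unfold coefR. rewrite sumR_first, sumR_zero by (intros k; simpl binom; ring).
  simpl. rewrite binom_0_r. ring.
Qed.

Lemma coefR_0_l j : coefR 0 j = (-1) ^ j.
Proof.
  unfold coefR. rewrite sumR_first, sumR_zero by (intros k; simpl binom; ring).
  rewrite !binom_0_r, Nat.add_0_r. ring.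
Qed.

(* Pascal-type recurrences; they mirror one step of the walk. *)
Lemma coefP_succ_l i j : coefP (S i) j = coefP i j + coefR i j.
Proof.
  unfold coefP, coefR. simpl (S i + j)%nat.
  rewrite <- (sumR_last_zero (fun k => (-1) ^ (j + k) * binom i (S k) * binom j k))
    by (rewrite (binom_gt i) by lia; ring).
  rewrite <- (sumR_last_zero (fun k => (-1) ^ (j + k) * binom i k * binom j k) (S (i + j)))
    by (rewrite (binom_gt i) by lia; ring).
  rewrite <- sumR_add. apply sumR_ext. intros k _. simpl binom. ring.
Qed.

Lemma coefQ_succ_r i j : coefQ i (S j) = coefR i j - coefQ i j.
Proof.
  unfold coefQ, coefR. replace (i + S j)%nat with (S (i + j)) by lia.
  rewrite <- (sumR_last_zero (fun k => (-1) ^ (j + k) * binom i k * binom j k) (S (i + j)))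
    by (rewrite (binom_gt j) by lia; ring).
  rewrite <- (sumR_last_zero (fun k => (-1) ^ (j + k + 1) * binom i k * binom j (S k)) (S (i + j)))
    by (rewrite (binom_gt j) by lia; ring).
  unfold Rminus. rewrite <- sumR_opp, <- sumR_add. apply sumR_ext. intros k _.
  replace (S j + k + 1)%nat with (S (S (j + k))) by lia.
  replace (j + k + 1)%nat with (S (j + k)) by lia.
  simpl binom. simpl pow. ring.
Qed.

Lemma coefR_succ_r i j : coefR i (S j) = coefP i j - coefR i j.
Proof.
  unfold coefR, coefP. replace (i + S j)%nat with (S (i + j)) by lia.
  rewrite sumR_first, (sumR_first (fun k => (-1) ^ (j + k) * binom i k * binom j k) (i + j)).
  rewrite <- (sumR_last_zero (fun k => (-1) ^ (j + S k) * binom i (S k) * binom j (S k)) (i + j))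
    by (rewrite (binom_gt i) by lia; ring).
  assert (E : sumR (fun k => (-1) ^ (S j + S k) * binom i (S k) * binom (S j) (S k)) (S (i + j))
    = sumR (fun k => (-1) ^ (j + k) * binom i (S k) * binom j k) (S (i + j))
      - sumR (fun k => (-1) ^ (j + S k) * binom i (S k) * binom j (S k)) (S (i + j))).
  { unfold Rminus. rewrite <- sumR_opp, <- sumR_add. apply sumR_ext. intros k _.
    replace (S j + S k)%nat with (S (S (j + k))) by lia.
    replace (j + S k)%nat with (S (j + k)) by lia. simpl binom. simpl pow. ring. }
  rewrite E, !binom_0_r, !Nat.add_0_r. simpl pow. ring.
Qed.

Lemma coefR_succ_l i j : coefR (S i) j = coefR i j + coefQ i j.
Proof.
  unfold coefR, coefQ. simpl (S i + j)%nat.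
  rewrite sumR_first, (sumR_first (fun k => (-1) ^ (j + k) * binom i k * binom j k) (i + j)).
  rewrite <- (sumR_last_zero (fun k => (-1) ^ (j + S k) * binom i (S k) * binom j (S k)) (i + j))
    by (rewrite (binom_gt i) by lia; ring).
  assert (E : sumR (fun k => (-1) ^ (j + S k) * binom (S i) (S k) * binom j (S k)) (S (i + j))
    = sumR (fun k => (-1) ^ (j + k + 1) * binom i k * binom j (S k)) (S (i + j))
      + sumR (fun k => (-1) ^ (j + S k) * binom i (S k) * binom j (S k)) (S (i + j))).
  { rewrite <- sumR_add. apply sumR_ext. intros k _.
    replace (j + k + 1)%nat with (j + S k)%nat by lia. simpl binom. ring. }
  rewrite E, !binom_0_r, !Nat.add_0_r. ring.
Qed.

Definition isq2 : R := / sqrt 2.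

Lemma isq2_sqr : isq2 * isq2 = / 2.
Proof. unfold isq2. rewrite <- Rinv_mult, sqrt_sqrt; lra. Qed.

Lemma pH_SS i j : pH (S i) (S j) = isq2 ^ S (i + j) * coefP i j.
Proof.
  unfold pH. replace (S i + S j - 1)%nat with (S (i + j)) by lia. f_equal.
  rewrite sum1_sumR. replace (S i - 1)%nat with i by lia.
  unfold coefP. rewrite (sumR_trunc _ (Nat.min i (S j)) (S (i + j))); [|intros k Hk|lia].
  - apply sumR_ext. intros k Hk.
    replace (S j - S k)%nat with (j - k)%nat by lia. rewrite sign_sub by lia.
    replace (S k - 1)%nat with k by lia. replace (S j - 1)%nat with j by lia.
    rewrite !C_binom by lia. ring.
  - destruct (Nat.le_gt_cases (S k) i).
    + rewrite (binom_gt j) by lia. ring.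
    + rewrite (binom_gt i) by lia. ring.
Qed.

Lemma qH_SS i j : qH (S i) (S j) = isq2 ^ S (i + j) * coefQ i j.
Proof.
  unfold qH. replace (S i + S j - 1)%nat with (S (i + j)) by lia. f_equal.
  rewrite sum1_sumR. replace (S j - 1)%nat with j by lia.
  unfold coefQ. rewrite (sumR_trunc _ (Nat.min (S i) j) (S (i + j))); [|intros k Hk|lia].
  - apply sumR_ext. intros k Hk.
    replace (S j - S k - 1)%nat with (j - S k)%nat by lia. rewrite sign_sub by lia.
    replace (S k - 1)%nat with k by lia. replace (j + S k)%nat with (j + k + 1)%nat by lia.
    replace (S i - 1)%nat with i by lia. rewrite !C_binom by lia. ring.
  - destruct (Nat.le_gt_cases k i).
    + rewrite (binom_gt j (S k)) by lia. ring.
    + rewrite (binom_gt i) by lia. ring.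
Qed.

Lemma pH_S0 i : pH (S i) 0 = isq2 ^ i.
Proof. unfold pH. f_equal. lia. Qed.

Lemma qH_0S j : qH 0 (S j) = (- isq2) ^ j.
Proof. unfold qH. f_equal. lia. Qed.

Lemma qH_l0 l : qH l 0 = 0.
Proof. destruct l; reflexivity. Qed.

(* The third amplitude of the walk, which does not appear in the statement
   but is needed to close the recurrences for [pH] and [qH]. *)
Definition rH (l m : nat) : R :=
  match l, m with S i, S j => isq2 ^ S (i + j) * coefR i j | _, _ => 0 end.

Lemma rH_l0 l : rH l 0 = 0.
Proof. destruct l; reflexivity. Qed.

Lemma pH_succ_l i m : (1 <= i + m)%nat -> pH (S i) m = isq2 * (pH i m + rH i m).
Proof.
  intros H. destruct m as [|j].
  - destruct i as [|i]; [lia|]. rewrite !pH_S0, rH_l0. simpl. ring.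
  - destruct i as [|i].
    + rewrite pH_SS, coefP_0_l. simpl. ring.
    + unfold rH. rewrite !pH_SS, coefP_succ_l.
      replace (S (S i + j)) with (S (S (i + j))) by lia. simpl. ring.
Qed.

Lemma rH_succ_l i m : (1 <= i + m)%nat -> rH (S i) m = isq2 * (rH i m + qH i m).
Proof.
  intros H. destruct m as [|j]; [rewrite !rH_l0, qH_l0; ring|].
  destruct i as [|i].
  - rewrite qH_0S. unfold rH. rewrite coefR_0_l.
    replace (- isq2) with (-1 * isq2) by ring. rewrite Rpow_mult_distr. simpl. ring.
  - unfold rH. rewrite !qH_SS, coefR_succ_l.
    replace (S (S i + j)) with (S (S (i + j))) by lia. simpl. ring.
Qed.

Lemma qH_succ_r l j : (1 <= l + j)%nat -> qH l (S j) = isq2 * (rH l j - qH l j).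
Proof.
  intros H. destruct l as [|i].
  - destruct j as [|j]; [lia|]. rewrite !qH_0S. simpl. ring.
  - destruct j as [|j].
    + rewrite qH_SS, coefQ_0_r, rH_l0, qH_l0. ring.
    + unfold rH. rewrite !qH_SS, coefQ_succ_r.
      replace (i + S j)%nat with (S (i + j)) by lia. simpl. ring.
Qed.

Lemma rH_succ_r l j : (1 <= l + j)%nat -> rH l (S j) = isq2 * (pH l j - rH l j).
Proof.
  intros H. destruct l as [|i]; [simpl; ring|].
  destruct j as [|j].
  - unfold rH. rewrite pH_S0, coefR_0_r, Nat.add_0_r. simpl. ring.
  - unfold rH. rewrite !pH_SS, coefR_succ_r.
    replace (i + S j)%nat with (S (i + j)) by lia. simpl. ring.
Qed.

(* Real 2x2 matrices: the free walk (environment zero) has real amplitudes. *)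
Record RM2 := mkRM2 { r11 : R; r12 : R; r21 : R; r22 : R }.

Definition RM0 : RM2 := mkRM2 0 0 0 0.

(* One step of the free walk, [P A + Q B] with [P = isq2 [[1,1],[0,0]]] and
   [Q = isq2 [[0,0],[1,-1]]]. *)
Definition free_step (A B : RM2) : RM2 :=
  mkRM2 (isq2 * (r11 A + r21 A)) (isq2 * (r12 A + r22 A))
        (isq2 * (r11 B - r21 B)) (isq2 * (r12 B - r22 B)).

Fixpoint free (n l m : nat) : RM2 :=
  match n with
  | O => match l, m with O, O => mkRM2 1 0 0 1 | _, _ => RM0 end
  | S n' => free_step (match l with O => RM0 | S l' => free n' l' m end)
                      (match m with O => RM0 | S m' => free n' l m' end)
  end.

Lemma free_succ n l m :
  free (S n) l m = free_step (match l with O => RM0 | S l' => free n l' m end)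
                             (match m with O => RM0 | S m' => free n l m' end).
Proof. reflexivity. Qed.

Definition amplitudes (X : RM2) (l m : nat) : Prop :=
  isq2 * (r11 X + r12 X) = pH l m /\ isq2 * (r21 X - r22 X) = qH l m /\
  isq2 * (r11 X - r12 X) = rH l m /\ isq2 * (r21 X + r22 X) = rH l m.

Lemma free_amplitudes n : forall l m, (l + m = S n)%nat -> amplitudes (free (S n) l m) l m.
Proof.
  induction n as [|n IH]; intros l m Hlm.
  - destruct l as [|[|l]], m as [|[|m]]; try lia; unfold amplitudes; cbn;
      repeat split;
      first [ring | transitivity (2 * (isq2 * isq2)); [ring | rewrite isq2_sqr; field]].
  - rewrite free_succ.
    set (A := match l with O => RM0 | S l' => free (S n) l' m end).
    set (B := match m with O => RM0 | S m' => free (S n) l m' end).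
    assert (HA : match l with O => A = RM0 | S i => amplitudes A i m end).
    { destruct l; [reflexivity|]. apply IH. lia. }
    assert (HB : match m with O => B = RM0 | S j => amplitudes B l j end).
    { destruct m; [reflexivity|]. apply IH. lia. }
    clearbody A B. unfold amplitudes, free_step; cbn [r11 r12 r21 r22].
    repeat split.
    + destruct l as [|i]; [subst A; simpl; ring|].
      destruct HA as (H1 & _ & _ & H4). rewrite pH_succ_l, <- H1, <- H4 by lia. ring.
    + destruct m as [|j]; [subst B; rewrite qH_l0; simpl; ring|].
      destruct HB as (_ & H2 & H3 & _). rewrite qH_succ_r, <- H2, <- H3 by lia. ring.
    + destruct l as [|i]; [subst A; simpl; ring|].
      destruct HA as (_ & H2 & H3 & _). rewrite rH_succ_l, <- H2, <- H3 by lia. ring.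
    + destruct m as [|j]; [subst B; rewrite rH_l0; simpl; ring|].
      destruct HB as (H1 & _ & _ & H4). rewrite rH_succ_r, <- H1, <- H4 by lia. ring.
Qed.

(* The coefficient of [sin omega_0] in the probability. *)
Definition cross (X : RM2) : R := r11 X * r12 X + r21 X * r22 X.

(* The two [rH] combinations agree, so they cancel from the cross term. *)
Lemma cross_amplitudes X l m : amplitudes X l m -> cross X = / 2 * (pH l m ^ 2 - qH l m ^ 2).
Proof.
  intros (H1 & H2 & H3 & H4). rewrite <- H1, <- H2.
  assert (E : 4 * (isq2 * isq2) * cross X =
     (isq2 * (r11 X + r12 X)) ^ 2 - (isq2 * (r21 X - r22 X)) ^ 2
   + (isq2 * (r21 X + r22 X)) ^ 2 - (isq2 * (r11 X - r12 X)) ^ 2)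
    by (unfold cross; ring).
  rewrite H3, H4, isq2_sqr in E. lra.
Qed.

Lemma free_cross l m : cross (free (l + m) l m) = / 2 * (pH l m ^ 2 - qH l m ^ 2).
Proof.
  destruct (l + m)%nat as [|n] eqn:E.
  - replace l with O by lia. replace m with O by lia. unfold cross, pH, qH. simpl. ring.
  - apply cross_amplitudes, free_amplitudes, E.
Qed.

Lemma C_eq (z u : Defs.C) : fst z = fst u -> snd z = snd u -> z = u.
Proof. destruct z, u; simpl; intros; subst; reflexivity. Qed.

Lemma M2_eq (A B : M2) :
  m11 A = m11 B -> m12 A = m12 B -> m21 A = m21 B -> m22 A = m22 B -> A = B.
Proof. destruct A, B; simpl; intros; subst; reflexivity. Qed.

Ltac unfold_M2 :=
  cbn [Madd Mmul Mapply Cadd Cmul fst snd m11 m12 m21 m22 Mzero Mid Defs.C0 Defs.C1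
       Px Qx ax bx cx dx Cr Cexpi].

Ltac destruct_M2 :=
  repeat match goal with
  | A : M2 |- _ => destruct A
  | z : Defs.C |- _ => destruct z
  end.

Ltac M2_ring := destruct_M2; apply M2_eq; apply C_eq; unfold_M2; ring.

Lemma Mmul_assoc A B D : Mmul A (Mmul B D) = Mmul (Mmul A B) D.
Proof. M2_ring. Qed.

Lemma Mmul_Madd_r A B D : Mmul A (Madd B D) = Madd (Mmul A B) (Mmul A D).
Proof. M2_ring. Qed.

Lemma Mmul_Madd_l A B D : Mmul (Madd A B) D = Madd (Mmul A D) (Mmul B D).
Proof. M2_ring. Qed.

Lemma Mmul_0_l A : Mmul Mzero A = Mzero.
Proof. M2_ring. Qed.

Lemma Mmul_0_r A : Mmul A Mzero = Mzero.
Proof. M2_ring. Qed.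

Lemma Mmul_1_l A : Mmul Mid A = A.
Proof. M2_ring. Qed.

Lemma Mapply_Mmul A B v : Mapply (Mmul A B) v = Mapply A (Mapply B v).
Proof.
  destruct v. destruct_M2. unfold Mapply. f_equal; apply C_eq; unfold_M2; ring.
Qed.

(* The gauge phase: [phase w (-1) = 0] and [phase w x = phase w (x+1) + w (x+1)],
   i.e. minus a discrete primitive of the environment, shifted by [omega_0]. *)
Definition phase (w : env) (x : Z) : R :=
  if (x <? 0)%Z then sumR (fun k => w (- Z.of_nat (S k))%Z) (Z.to_nat (- x) - 1)
  else - sumR (fun k => w (Z.of_nat k)) (S (Z.to_nat x)).

Lemma phase_step w x : phase w x = phase w (x + 1) + w (x + 1)%Z.
Proof.
  unfold phase. destruct (Z_lt_le_dec x (-1)) as [Hx|Hx];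
    [|destruct (Z.eq_dec x (-1)) as [->|Hx']].
  - rewrite (proj2 (Z.ltb_lt x 0)), (proj2 (Z.ltb_lt (x + 1) 0)) by lia.
    replace (Z.to_nat (- x) - 1)%nat with (S (Z.to_nat (- (x + 1)) - 1)) by lia.
    cbn [sumR]. replace (- Z.of_nat (S (Z.to_nat (- (x + 1)) - 1)))%Z with (x + 1)%Z by lia.
    reflexivity.
  - simpl. ring.
  - rewrite (proj2 (Z.ltb_ge x 0)), (proj2 (Z.ltb_ge (x + 1) 0)) by lia.
    replace (Z.to_nat (x + 1)) with (S (Z.to_nat x)) by lia.
    cbn [sumR]. replace (Z.of_nat (S (Z.to_nat x))) with (x + 1)%Z by lia. ring.
Qed.

(* Diagonal gauge matrices: [Xi^w_n(l,m) = D_x Xi^0_n(l,m) E] with [x = -l+m]. *)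
Definition gaugeD (w : env) (x : Z) : M2 :=
  mkM2 (Cexpi (phase w x)) Defs.C0 Defs.C0 (Cexpi (phase w (x - 1))).
Definition gaugeE (w : env) : M2 := mkM2 (Cexpi (w 0%Z)) Defs.C0 Defs.C0 Defs.C1.

Ltac trig_ring :=
  apply M2_eq; apply C_eq; unfold_M2; unfold env0;
  rewrite ?Ropp_0, ?cos_0, ?sin_0, ?cos_plus, ?sin_plus, ?cos_neg, ?sin_neg; ring.

Lemma gauge_P w x : Mmul (Px w (x + 1)) (gaugeD w (x + 1)) = Mmul (gaugeD w x) (Px env0 (x + 1)).
Proof.
  unfold gaugeD. replace (x + 1 - 1)%Z with x by lia. rewrite (phase_step w x). trig_ring.
Qed.

Lemma gauge_Q w x : Mmul (Qx w (x - 1)) (gaugeD w (x - 1)) = Mmul (gaugeD w x) (Qx env0 (x - 1)).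
Proof.
  assert (H : phase w (x - 1) = phase w (x - 1 - 1) + - w (x - 1)%Z).
  { rewrite (phase_step w (x - 1 - 1)). replace (x - 1 - 1 + 1)%Z with (x - 1)%Z by lia. ring. }
  unfold gaugeD. rewrite H. trig_ring.
Qed.

Lemma gauge_origin w : Mmul (gaugeD w 0) (gaugeE w) = Mid.
Proof.
  assert (H0 : phase w 0 = - w 0%Z) by (unfold phase; simpl; ring).
  assert (H1 : phase w (0 - 1) = 0) by reflexivity.
  pose proof (sin2_cos2 (w 0%Z)) as Hpyth. unfold Rsqr in Hpyth.
  unfold gaugeD, gaugeE. rewrite H0, H1.
  apply M2_eq; apply C_eq; unfold_M2; rewrite ?cos_neg, ?sin_neg, ?cos_0, ?sin_0; lra.
Qed.

Lemma conj_zero D E : Mzero = Mmul D (Mmul Mzero E).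
Proof. rewrite Mmul_0_l, Mmul_0_r. reflexivity. Qed.

Lemma conj_Madd D X Y E :
  Madd (Mmul D (Mmul X E)) (Mmul D (Mmul Y E)) = Mmul D (Mmul (Madd X Y) E).
Proof. rewrite Mmul_Madd_l, Mmul_Madd_r. reflexivity. Qed.

Lemma conj_P w x X E :
  Mmul (Px w (x + 1)) (Mmul (gaugeD w (x + 1)) (Mmul X E)) =
  Mmul (gaugeD w x) (Mmul (Mmul (Px env0 (x + 1)) X) E).
Proof. rewrite !Mmul_assoc, gauge_P. reflexivity. Qed.

Lemma conj_Q w x X E :
  Mmul (Qx w (x - 1)) (Mmul (gaugeD w (x - 1)) (Mmul X E)) =
  Mmul (gaugeD w x) (Mmul (Mmul (Qx env0 (x - 1)) X) E).
Proof. rewrite !Mmul_assoc, gauge_Q. reflexivity. Qed.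

Definition site (l m : nat) : Z := (- Z.of_nat l + Z.of_nat m)%Z.

Lemma XiAux_succ w n l m : XiAux w (S n) l m =
  Madd (match l with O => Mzero | S l' => Mmul (Px w (site l m + 1)) (XiAux w n l' m) end)
       (match m with O => Mzero | S m' => Mmul (Qx w (site l m - 1)) (XiAux w n l m') end).
Proof. reflexivity. Qed.

Lemma gauge w n : forall l m,
  XiAux w n l m = Mmul (gaugeD w (site l m)) (Mmul (XiAux env0 n l m) (gaugeE w)).
Proof.
  induction n as [|n IH]; intros l m.
  - destruct l, m; cbn [XiAux]; try apply conj_zero.
    rewrite Mmul_1_l. symmetry. apply gauge_origin.
  - rewrite !XiAux_succ, <- conj_Madd. f_equal.
    + destruct l as [|l]; [apply conj_zero|].
      rewrite IH. replace (site l m) with (site (S l) m + 1)%Z by (unfold site; lia).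
      apply conj_P.
    + destruct m as [|m]; [apply conj_zero|].
      rewrite IH. replace (site l m) with (site l (S m) - 1)%Z by (unfold site; lia).
      apply conj_Q.
Qed.

Definition Mreal (X : RM2) : M2 := mkM2 (r11 X, 0) (r12 X, 0) (r21 X, 0) (r22 X, 0).

Lemma free_real n : forall l m, XiAux env0 n l m = Mreal (free n l m).
Proof.
  induction n as [|n IH]; intros l m.
  - destruct l, m; reflexivity.
  - rewrite XiAux_succ, free_succ.
    destruct l, m; rewrite ?IH; unfold Mreal, free_step, RM0, isq2; cbn [r11 r12 r21 r22];
      trig_ring.
Qed.

Lemma pythagoras t : cos t * cos t + sin t * sin t = 1.
Proof. pose proof (sin2_cos2 t). unfold Rsqr in *. lra. Qed.

Lemma Vnorm2_phases a b v :
  Vnorm2 (Mapply (mkM2 (Cexpi a) Defs.C0 Defs.C0 (Cexpi b)) v) = Vnorm2 v.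
Proof.
  destruct v as [[z1 z2] [u1 u2]].
  unfold Vnorm2, Cnorm2. unfold_M2.
  transitivity ((cos a * cos a + sin a * sin a) * (z1 * z1 + z2 * z2) +
                (cos b * cos b + sin b * sin b) * (u1 * u1 + u2 * u2)); [ring|].
  rewrite (pythagoras a), (pythagoras b). ring.
Qed.

Definition sqnorm (X : RM2) : R := r11 X ^ 2 + r12 X ^ 2 + r21 X ^ 2 + r22 X ^ 2.

Lemma Vnorm2_real_twisted X t :
  Vnorm2 (Mapply (Mreal X) (Mapply (mkM2 (Cexpi t) Defs.C0 Defs.C0 Defs.C1) phistar))
  = sqnorm X / 2 + cross X * sin t.
Proof.
  destruct X as [a b c d]. unfold Vnorm2, Cnorm2, Mreal, phistar, sqnorm, cross.
  unfold_M2. cbn [r11 r12 r21 r22]. fold isq2.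
  transitivity ((isq2 * isq2) *
    ((a * a + c * c) * (cos t * cos t + sin t * sin t) + b * b + d * d
     + 2 * (a * b + c * d) * sin t)); [ring|].
  rewrite (pythagoras t), isq2_sqr. field.
Qed.

Lemma prob_decomposition w l m :
  prob w l m = sqnorm (free (l + m) l m) / 2 + cross (free (l + m) l m) * sin (w 0%Z).
Proof.
  unfold prob, Xi. rewrite gauge, !Mapply_Mmul.
  unfold gaugeD at 1. rewrite Vnorm2_phases, free_real.
  apply Vnorm2_real_twisted.
Qed.

Theorem proposition2 (w : env) (l m : nat) :
  prob w l m = prob env0 l m + / 2 * (pH l m ^ 2 - qH l m ^ 2) * sin (w 0%Z).
Proof.
  rewrite !prob_decomposition, free_cross.
  unfold env0. rewrite sin_0. ring.
Qed.
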